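(* Let $(X,d)$ be a metric space and $o\in X$ a point. If $X$ admits a conical bicombing $\phi$, then the metric space $(\mathrm{CBI}(X),D_o)$ admits a conical bicombing $\Phi$ such that the subset $\mathrm{RCBI}(X)\subset\mathrm{CBI}(X)$ of all reversible conical bicombings on $X$ is $\Phi$-convex.
   Context: A bicombing on a metric space $(Y,d)$ is a map $\sigma\colon Y\times Y\times[0,1]\to Y$ such that each $\sigma_{xy}:=\sigma(x,y,\cdot)$ is a geodesic from $x$ to $y$ ($\sigma_{xy}(0)=x$, $\sigma_{xy}(1)=y$, $d(\sigma_{xy}(s),\sigma_{xy}(t))=|s-t|d(x,y)$); it is conical if $d(\sigma_{xy}(t),\sigma_{x'y'}(t))\le(1-t)d(x,x')+t\,d(y,y')$ for all $x,y,x',y'$, $t\in[0,1]$, and reversible if $\sigma_{xy}(t)=\sigma_{yx}(1-t)$. $\mathrm{CBI}(X)$ is the set of all conical bicombings on $X$, with metric $D_o(\sigma,\tau):=\sup\{3^{-k}d(\sigma_{xy}(t),\tau_{xy}(t)) : k\ge 0,\ x,y\in B_{2^k}(o),\ t\in[0,1]\}$, where $B_r(o)$ is the ball of radius $r$ about $o$. A subset $A$ of $\mathrm{CBI}(X)$ is $\Phi$-convex if $\Phi(\sigma,\tau,t)\in A$ for all $\sigma,\tau\in A$, $t\in[0,1]$. *)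

From Stdlib Require Import Reals.
From Coquelicot Require Import Coquelicot.
Open Scope R_scope.

Definition is_metric {Y : Type} (d : Y -> Y -> R) : Prop :=
  (forall x y, 0 <= d x y) /\
  (forall x y, d x y = 0 <-> x = y) /\
  (forall x y, d x y = d y x) /\
  (forall x y z, d x z <= d x y + d y z).

(** A bicombing: sigma x y is a (linearly reparametrised) geodesic from x to y
    on [0,1]; values of the parameter outside [0,1] are irrelevant. *)
Definition is_bicombing {Y : Type} (d : Y -> Y -> R) (sigma : Y -> Y -> R -> Y) : Prop :=
  forall x y,
    sigma x y 0 = x /\ sigma x y 1 = y /\
    (forall s t, 0 <= s <= 1 -> 0 <= t <= 1 ->
       d (sigma x y s) (sigma x y t) = Rabs (s - t) * d x y).

Definition is_conical {Y : Type} (d : Y -> Y -> R) (sigma : Y -> Y -> R -> Y) : Prop :=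
  forall x y x' y' t, 0 <= t <= 1 ->
    d (sigma x y t) (sigma x' y' t) <= (1 - t) * d x x' + t * d y y'.

Definition conical_bicombing {Y : Type} (d : Y -> Y -> R) (sigma : Y -> Y -> R -> Y) : Prop :=
  is_bicombing d sigma /\ is_conical d sigma.

Definition reversible {Y : Type} (sigma : Y -> Y -> R -> Y) : Prop :=
  forall x y t, 0 <= t <= 1 -> sigma x y t = sigma y x (1 - t).

Definition CBI {X : Type} (d : X -> X -> R) : Type :=
  { sigma : X -> X -> R -> X | conical_bicombing d sigma }.

Definition D_set {X : Type} (d : X -> X -> R) (o : X)
  (sigma tau : X -> X -> R -> X) (r : R) : Prop :=
  exists (k : nat) (x y : X) (t : R),
    d o x <= 2 ^ k /\ d o y <= 2 ^ k /\ 0 <= t <= 1 /\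
    r = / (3 ^ k) * d (sigma x y t) (tau x y t).

(** D_o(sigma,tau) := sup of D_set (the set is nonempty and bounded above,
    so the supremum is a finite real). *)
Definition D_o {X : Type} (d : X -> X -> R) (o : X) (sigma tau : CBI d) : R :=
  real (Lub_Rbar (D_set d o (proj1_sig sigma) (proj1_sig tau))).

Definition RCBI {X : Type} (d : X -> X -> R) (sigma : CBI d) : Prop :=
  reversible (proj1_sig sigma).

Definition Phi_convex {Y : Type} (Phi : Y -> Y -> R -> Y) (A : Y -> Prop) : Prop :=
  forall s t u, A s -> A t -> 0 <= u <= 1 -> A (Phi s t u).

(** Put Phi(sigma, tau, u)_xy(t) := phi(sigma_xy(t), tau_xy(t), u).  Conicality of
    phi, applied pointwise, makes Phi(sigma, tau, u) a conical bicombing and makes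
    Phi conical for D_o, since the pointwise inequality survives the weighted
    supremum.  As phi-geodesics are linearly parametrised, every value in the set
    defining D_o(Phi(sigma,tau,a), Phi(sigma,tau,b)) is |a - b| times the
    corresponding value for D_o(sigma, tau), so u |-> Phi(sigma, tau, u) is a
    D_o-geodesic.
    Reversibility of sigma and tau passes to Phi(sigma, tau, u) pointwise. *)

From Stdlib Require Import Reals Lra FunctionalExtensionality ProofIrrelevance.
From Coquelicot Require Import Coquelicot.
Open Scope R_scope.

Lemma Lub_Rbar_bounded_ub {E : R -> Prop} {r0 M : R} :
  E r0 -> (forall r, E r -> r <= M) -> forall r, E r -> r <= real (Lub_Rbar E).
Proof.
  intros E_r0 E_ub r Er.
  destruct (Lub_Rbar_correct E) as [Hub Hlub].
  destruct (Lub_Rbar E) as [l| |].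
  - exact (Hub r Er).
  - exfalso. exact (Hlub (Finite M) E_ub).
  - exfalso. exact (Hub r0 E_r0).
Qed.

Lemma Lub_Rbar_bounded_least {E : R -> Prop} {r0 M : R} :
  E r0 -> (forall r, E r -> r <= M) ->
  forall B, (forall r, E r -> r <= B) -> real (Lub_Rbar E) <= B.
Proof.
  intros E_r0 E_ub B HB.
  destruct (Lub_Rbar_correct E) as [Hub Hlub].
  destruct (Lub_Rbar E) as [l| |].
  - exact (Hlub (Finite B) HB).
  - exfalso. exact (Hlub (Finite M) E_ub).
  - exfalso. exact (Hub r0 E_r0).
Qed.

Lemma Lub_Rbar_bounded_scal {E : R -> Prop} {r0 M : R} c :
  E r0 -> (forall r, E r -> r <= M) ->
  0 <= c ->
  real (Lub_Rbar (fun r => exists e, E e /\ r = c * e)) = c * real (Lub_Rbar E).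
Proof.
  intros E_r0 E_ub Hc.
  set (F := fun r => exists e, E e /\ r = c * e).
  assert (F_cr0 : F (c * r0)) by (exists r0; auto).
  assert (F_ub : forall r, F r -> r <= c * M).
  { intros r [e [Ee ->]]. apply Rmult_le_compat_l; auto. }
  pose proof (Lub_Rbar_bounded_ub F_cr0 F_ub) as F_sup.
  apply Rle_antisym.
  - apply (Lub_Rbar_bounded_least F_cr0 F_ub).
    intros r [e [Ee ->]]. apply Rmult_le_compat_l; auto.
    now apply (Lub_Rbar_bounded_ub E_r0 E_ub).
  - destruct (Req_dec c 0) as [-> | Hc0].
    + rewrite Rmult_0_l. apply F_sup. exists r0. split; auto; ring.
    + assert (sup_E : real (Lub_Rbar E) <= real (Lub_Rbar F) / c).
      { apply (Lub_Rbar_bounded_least E_r0 E_ub). intros e Ee.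
        apply Rmult_le_reg_l with c; [lra|].
        replace (c * (real (Lub_Rbar F) / c)) with (real (Lub_Rbar F)) by (field; lra).
        apply F_sup. now exists e. }
      apply Rmult_le_compat_l with (r := c) in sup_E; auto.
      replace (c * (real (Lub_Rbar F) / c)) with (real (Lub_Rbar F)) in sup_E
        by (field; lra).
      exact sup_E.
Qed.

Section Bicombings.

Variables (X : Type) (d : X -> X -> R).
Hypothesis Hd : is_metric d.

Lemma linear_path_of_lipschitz (f : R -> X) (D : R) :
  (forall s t, 0 <= s <= 1 -> 0 <= t <= 1 -> d (f s) (f t) <= Rabs (s - t) * D) ->
  d (f 0) (f 1) = D ->
  forall s t, 0 <= s <= 1 -> 0 <= t <= 1 -> d (f s) (f t) = Rabs (s - t) * D.
Proof.
  intros Hlip HD.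
  destruct Hd as [_ [_ [Hsym Htri]]].
  assert (Hle : forall s t, 0 <= s <= 1 -> 0 <= t <= 1 -> s <= t ->
                d (f s) (f t) = Rabs (s - t) * D).
  { intros s t Hs Ht Hst.
    pose proof (Hlip 0 s ltac:(lra) Hs) as H0s.
    pose proof (Hlip s t Hs Ht) as Hst'.
    pose proof (Hlip t 1 Ht ltac:(lra)) as Ht1.
    rewrite Rabs_left1 in * by lra.
    (* d(f0,f1) <= d(f0,fs) + d(fs,ft) + d(ft,f1) forces equality in each bound *)
    pose proof (Htri (f 0) (f s) (f 1)).
    pose proof (Htri (f s) (f t) (f 1)).
    lra. }
  intros s t Hs Ht.
  destruct (Rle_dec s t).
  - now apply Hle.
  - rewrite Hsym, Rabs_minus_sym. apply Hle; auto; lra.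
Qed.

Lemma bicombing_diag sigma :
  is_bicombing d sigma -> forall x t, 0 <= t <= 1 -> sigma x x t = x.
Proof.
  intros Hsigma x t Ht.
  destruct (Hsigma x x) as [H0 [_ Hdist]].
  destruct Hd as [_ [Hzero _]].
  assert (Hdx : d (sigma x x t) (sigma x x 0) = 0).
  { rewrite Hdist by lra. replace (d x x) with 0 by (symmetry; now apply Hzero). ring. }
  rewrite H0 in Hdx. now apply Hzero.
Qed.

Lemma bicombing_dist_le {sigma} :
  is_bicombing d sigma -> forall x y t, 0 <= t <= 1 -> d x (sigma x y t) <= d x y.
Proof.
  intros Hsigma x y t Ht.
  destruct (Hsigma x y) as [H0 [_ Hdist]].
  rewrite <- H0 at 1. rewrite Hdist by lra.
  rewrite Rabs_left1 by lra.
  pose proof (proj1 Hd x y). nra.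
Qed.

Variable phi : X -> X -> R -> X.
Hypothesis Hphi : conical_bicombing d phi.

Lemma conical_bicombing_pointwise_comb sigma tau u :
  conical_bicombing d sigma -> conical_bicombing d tau -> 0 <= u <= 1 ->
  conical_bicombing d (fun x y s => phi (sigma x y s) (tau x y s) u).
Proof.
  destruct Hphi as [Hphi_b Hphi_c].
  intros [Hsigma_b Hsigma_c] [Htau_b Htau_c] Hu.
  split.
  - intros x y.
    destruct (Hsigma_b x y) as [S0 [S1 Sdist]], (Htau_b x y) as [T0 [T1 Tdist]].
    rewrite S0, T0, S1, T1, !(bicombing_diag _ Hphi_b) by exact Hu.
    repeat split; auto.
    apply (linear_path_of_lipschitz (fun s => phi (sigma x y s) (tau x y s) u)).
    + intros s t Hs Ht.
      eapply Rle_trans; [now apply Hphi_c|].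
      rewrite Sdist, Tdist by auto.
      pose proof (Rmult_le_pos _ _ (Rabs_pos (s - t)) (proj1 Hd x y)). nra.
    + simpl. rewrite S0, T0, S1, T1, !(bicombing_diag _ Hphi_b) by exact Hu.
      reflexivity.
  - intros x y x' y' t Ht.
    eapply Rle_trans; [now apply Hphi_c|].
    pose proof (Hsigma_c x y x' y' t Ht). pose proof (Htau_c x y x' y' t Ht).
    nra.
Qed.

(* Phi must be total in its real parameter, so u is first clamped into [0,1]. *)
Definition clamp01 (u : R) : R := Rmax 0 (Rmin 1 u).

Lemma clamp01_in u : 0 <= clamp01 u <= 1.
Proof. unfold clamp01, Rmax, Rmin; repeat destruct Rle_dec; lra. Qed.

Lemma clamp01_id u : 0 <= u <= 1 -> clamp01 u = u.
Proof. unfold clamp01, Rmax, Rmin; repeat destruct Rle_dec; lra. Qed.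

Definition Phi_comb (sigma tau : CBI d) (u : R) : CBI d :=
  exist _ (fun x y s => phi (proj1_sig sigma x y s) (proj1_sig tau x y s) (clamp01 u))
    (conical_bicombing_pointwise_comb _ _ _ (proj2_sig sigma) (proj2_sig tau) (clamp01_in u)).

Lemma Phi_comb_val sigma tau u : 0 <= u <= 1 ->
  proj1_sig (Phi_comb sigma tau u)
  = fun x y s => phi (proj1_sig sigma x y s) (proj1_sig tau x y s) u.
Proof. intros Hu. simpl. now rewrite clamp01_id. Qed.

Lemma CBI_eq (sigma tau : CBI d) : proj1_sig sigma = proj1_sig tau -> sigma = tau.
Proof. apply eq_sig_hprop. intros. apply proof_irrelevance. Qed.

Lemma Phi_comb_0 sigma tau : Phi_comb sigma tau 0 = sigma.
Proof.
  apply CBI_eq. rewrite Phi_comb_val by lra.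
  do 3 (apply functional_extensionality; intro).
  apply (proj1 Hphi).
Qed.

Lemma Phi_comb_1 sigma tau : Phi_comb sigma tau 1 = tau.
Proof.
  apply CBI_eq. rewrite Phi_comb_val by lra.
  do 3 (apply functional_extensionality; intro).
  apply (proj1 Hphi).
Qed.

Lemma RCBI_Phi_convex : Phi_convex Phi_comb (RCBI d).
Proof.
  intros sigma tau u Hsigma Htau Hu x y t Ht.
  rewrite Phi_comb_val by exact Hu.
  now rewrite (Hsigma x y t Ht), (Htau x y t Ht).
Qed.

Variable o : X.

Lemma D_set_0 (sigma tau : CBI d) : D_set d o (proj1_sig sigma) (proj1_sig tau) 0.
Proof.
  destruct Hd as [_ [Hzero _]].
  assert (Hoo : d o o = 0) by now apply Hzero.
  exists 0%nat, o, o, 0.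
  rewrite (proj1 (proj1 (proj2_sig sigma) o o)), (proj1 (proj1 (proj2_sig tau) o o)), Hoo.
  simpl. repeat split; lra.
Qed.

Lemma D_set_le_4 (sigma tau : CBI d) r :
  D_set d o (proj1_sig sigma) (proj1_sig tau) r -> r <= 4.
Proof.
  destruct Hd as [Hpos [_ [Hsym Htri]]].
  intros [k [x [y [t [Hx [Hy [Ht ->]]]]]]].
  assert (H3k : 0 < 3 ^ k) by (apply pow_lt; lra).
  assert (H2k : 2 ^ k <= 3 ^ k) by (apply pow_incr; lra).
  pose proof (bicombing_dist_le (proj1 (proj2_sig sigma)) x y t Ht).
  pose proof (bicombing_dist_le (proj1 (proj2_sig tau)) x y t Ht).
  pose proof (Htri (proj1_sig sigma x y t) x (proj1_sig tau x y t)).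
  pose proof (Htri x o y).
  rewrite (Hsym _ x), (Hsym x o) in *.
  apply Rmult_le_reg_l with (3 ^ k); auto.
  rewrite <- Rmult_assoc, Rinv_r, Rmult_1_l by lra.
  lra.
Qed.

Lemma D_o_ub (sigma tau : CBI d) r :
  D_set d o (proj1_sig sigma) (proj1_sig tau) r -> r <= D_o d o sigma tau.
Proof. apply (Lub_Rbar_bounded_ub (D_set_0 sigma tau) (D_set_le_4 sigma tau)). Qed.

Lemma D_o_least (sigma tau : CBI d) B :
  (forall r, D_set d o (proj1_sig sigma) (proj1_sig tau) r -> r <= B) ->
  D_o d o sigma tau <= B.
Proof. apply (Lub_Rbar_bounded_least (D_set_0 sigma tau) (D_set_le_4 sigma tau)). Qed.

Lemma D_set_Phi_comb sigma tau a b r :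
  0 <= a <= 1 -> 0 <= b <= 1 ->
  D_set d o (proj1_sig (Phi_comb sigma tau a)) (proj1_sig (Phi_comb sigma tau b)) r <->
  exists e, D_set d o (proj1_sig sigma) (proj1_sig tau) e /\ r = Rabs (a - b) * e.
Proof.
  intros Ha Hb.
  rewrite !Phi_comb_val by assumption.
  assert (Hlin : forall x y t,
    d (phi (proj1_sig sigma x y t) (proj1_sig tau x y t) a)
      (phi (proj1_sig sigma x y t) (proj1_sig tau x y t) b)
    = Rabs (a - b) * d (proj1_sig sigma x y t) (proj1_sig tau x y t)).
  { intros. now apply (proj1 Hphi). }
  split.
  - intros [k [x [y [t [Hx [Hy [Ht ->]]]]]]].
    eexists. split; [exists k, x, y, t; repeat split; eauto; apply Ht|].
    rewrite Hlin. ring.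
  - intros [e [[k [x [y [t [Hx [Hy [Ht ->]]]]]]] ->]].
    exists k, x, y, t. repeat split; auto; try apply Ht.
    rewrite Hlin. ring.
Qed.

Lemma D_o_Phi_comb sigma tau a b :
  0 <= a <= 1 -> 0 <= b <= 1 ->
  D_o d o (Phi_comb sigma tau a) (Phi_comb sigma tau b) = Rabs (a - b) * D_o d o sigma tau.
Proof.
  intros Ha Hb. unfold D_o.
  rewrite (Lub_Rbar_eqset _ _ (fun r => D_set_Phi_comb sigma tau a b r Ha Hb)).
  apply (Lub_Rbar_bounded_scal _ (D_set_0 sigma tau) (D_set_le_4 sigma tau)), Rabs_pos.
Qed.

Lemma D_o_Phi_comb_conical sigma tau sigma' tau' u :
  0 <= u <= 1 ->
  D_o d o (Phi_comb sigma tau u) (Phi_comb sigma' tau' u)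
  <= (1 - u) * D_o d o sigma sigma' + u * D_o d o tau tau'.
Proof.
  intros Hu. apply D_o_least.
  rewrite !Phi_comb_val by exact Hu.
  intros r [k [x [y [t [Hx [Hy [Ht ->]]]]]]].
  set (w := / 3 ^ k).
  assert (Hw : 0 < w) by (apply Rinv_0_lt_compat, pow_lt; lra).
  assert (Hsigma : w * d (proj1_sig sigma x y t) (proj1_sig sigma' x y t)
                   <= D_o d o sigma sigma')
    by (apply D_o_ub; now exists k, x, y, t).
  assert (Htau : w * d (proj1_sig tau x y t) (proj1_sig tau' x y t) <= D_o d o tau tau')
    by (apply D_o_ub; now exists k, x, y, t).
  pose proof (proj2 Hphi (proj1_sig sigma x y t) (proj1_sig tau x y t)
                (proj1_sig sigma' x y t) (proj1_sig tau' x y t) u Hu) as Hcon.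
  apply Rmult_le_compat_l with (r := w) in Hcon; [nra | lra].
Qed.

Lemma Phi_comb_conical_bicombing : conical_bicombing (D_o d o) Phi_comb.
Proof.
  split.
  - intros sigma tau.
    split; [apply Phi_comb_0 | split; [apply Phi_comb_1 |]].
    intros. now apply D_o_Phi_comb.
  - intros sigma tau sigma' tau' u Hu. now apply D_o_Phi_comb_conical.
Qed.

End Bicombings.

Theorem lemma4p2 (X : Type) (d : X -> X -> R) (o : X)
  (Hd : is_metric d)
  (phi : X -> X -> R -> X) (Hphi : conical_bicombing d phi) :
  exists Phi : CBI d -> CBI d -> R -> CBI d,
    conical_bicombing (D_o d o) Phi /\ Phi_convex Phi (RCBI d).
Proof.
  exists (Phi_comb X d Hd phi Hphi).
  split.
  - apply Phi_comb_conical_bicombing.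
  - apply RCBI_Phi_convex.
Qed.
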